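(* For a nonzero ideal $E$ of $C(X)_\mathcal{P}$ the following are equivalent: (1) $E$ intersects every nonzero $z$-ideal of $C(X)_\mathcal{P}$ nontrivially; (2) $E$ is an essential ideal of $C(X)_\mathcal{P}$; (3) $int_{X_\mathcal{P}}\bigcap Z_\mathcal{P}[E]=\emptyset$, i.e. $\bigcap\{Z_\mathcal{P}(f): f\in E\}$ is nowhere dense in $X_\mathcal{P}$.
   Context: Let $(X,\tau)$ be a $T_1$ topological space and $\mathcal{P}$ an ideal of closed subsets of $X$ (a nonempty family of closed sets closed under finite unions and under taking closed subsets). For $f\colon X\to\mathbb{R}$, $D_f$ denotes the set of points of discontinuity of $f$, and $C(X)_\mathcal{P}=\{f\colon X\to\mathbb{R} : \overline{D_f}\in\mathcal{P}\}$, a commutative ring with unity under pointwise operations. For $f\in C(X)_\mathcal{P}$, $Z_\mathcal{P}(f)=\{x: f(x)=0\}$, $coz(f)=X\setminus Z_\mathcal{P}(f)$, and for an ideal $I$, $Z_\mathcal{P}[I]=\{Z_\mathcal{P}(f): f\in I\}$. $X_\mathcal{P}$ is $X$ with the topology having base $\{coz(f): f\in C(X)_\mathcal{P}\}$, $int_{X_\mathcal{P}}$ its interior operator. An ideal is essential if it intersects every nonzero ideal nontrivially. In a commutative ring, $M(a)$ is the intersection of all maximal ideals containing $a$, and an ideal $I$ is a $z$-ideal if $a\in I\Rightarrow M(a)\subseteq I$. *)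

From HB Require Import structures.
From mathcomp Require Import all_boot all_order all_algebra.
From mathcomp Require Import all_classical all_reals topology normedtype.
Set Implicit Arguments. Unset Strict Implicit. Unset Printing Implicit Defensive.
Import Order.TTheory GRing.Theory Num.Theory.
Import numFieldNormedType.Exports.
Local Open Scope classical_set_scope.
Local Open Scope ring_scope.

Section CXP.
Variables (X : topologicalType) (R : realType).

Definition closed_ideal (P : set (set X)) : Prop :=
  [/\ P !=set0,
      (forall A, P A -> closed A),
      (forall A B, P A -> P B -> P (A `|` B)) &
      (forall A B, P A -> closed B -> B `<=` A -> P B)].

Definition discont (f : X -> R) : set X := [set x | ~ {for x, continuous f}].

Definition CP (P : set (set X)) : set (X -> R) :=
  [set f | P (closure (discont f))].

Definition ZP (f : X -> R) : set X := [set x | f x = 0].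
Definition coz (f : X -> R) : set X := [set x | f x != 0].

Definition is_ideal (P : set (set X)) (I : set (X -> R)) : Prop :=
  [/\ I `<=` CP P,
      I (fun _ => 0),
      (forall f g, I f -> I g -> I (fun x => f x + g x)),
      (forall f, I f -> I (fun x => - f x)) &
      (forall f g, CP P g -> I f -> I (fun x => g x * f x))].

Definition zero_fun : X -> R := fun _ => 0.
Definition one_fun : X -> R := fun _ => 1.

Definition nonzero_ideal (I : set (X -> R)) : Prop :=
  exists2 f, I f & f <> zero_fun.

Definition is_maximal_ideal (P : set (set X)) (M : set (X -> R)) : Prop :=
  [/\ is_ideal P M, ~ M one_fun &
      (forall J, is_ideal P J -> ~ J one_fun -> M `<=` J -> J = M)].

Definition Mof (P : set (set X)) (a : X -> R) : set (X -> R) :=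
  [set g | CP P g /\ forall M, is_maximal_ideal P M -> M a -> M g].

Definition is_z_ideal (P : set (set X)) (I : set (X -> R)) : Prop :=
  is_ideal P I /\ forall a, I a -> Mof P a `<=` I.

Definition essential_ideal (P : set (set X)) (E : set (X -> R)) : Prop :=
  is_ideal P E /\
  forall J, is_ideal P J -> nonzero_ideal J ->
    exists2 f, (E `&` J) f & f <> zero_fun.

(* interior in X_P, whose topology has base {coz f : f in C(X)_P} *)
Definition int_XP (P : set (set X)) (A : set X) : set X :=
  [set x | exists2 f, CP P f & coz f x /\ coz f `<=` A].

Definition bigcapZ (E : set (X -> R)) : set X :=
  [set x | forall f, E f -> ZP f x].

End CXP.
Arguments int_XP {X} R P A.
Arguments zero_fun {X R}.
Arguments one_fun {X R}.
Arguments CP {X} R P f.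

From Pilot Require Import Defs.
From HB Require Import structures.
From mathcomp Require Import all_boot all_order all_algebra.
From mathcomp Require Import all_classical all_reals topology normedtype.
Local Open Scope classical_set_scope.
Local Open Scope ring_scope.
Import Order.TTheory GRing.Theory Num.Theory.
Import numFieldNormedType.Exports.

Set Implicit Arguments.
Unset Strict Implicit.

(* For a point y, the functions of C(X)_P vanishing at y form a maximal ideal,
   so every element of M(a) vanishes on Z(a).  Hence for f in C(X)_P the ideal
   of all g with coz g contained in coz f is a z-ideal, nonzero when f is.  If
   int_{X_P} (\bigcap Z[E]) contains a point, it contains some coz f, and the
   z-ideal of f meets E trivially; conversely, if that interior is empty, any
   g <> 0 of an ideal J is nonzero at a point where some e in E is nonzero,
   and g e is a nonzero element of E and J. *)

Section CPRing.
Variables (X : topologicalType) (R : realType) (P : set (set X)).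
Hypothesis hP : closed_ideal P.

Lemma CP_lift (f g h : X -> R) :
  (forall x, {for x, continuous f} -> {for x, continuous g} ->
     {for x, continuous h}) ->
  CP R P f -> CP R P g -> CP R P h.
Proof.
case: hP => _ _ PU PS hcont; rewrite /CP /= => Cf Cg.
set A := closure (discont f) `|` closure (discont g).
have clA : closed A by apply: closedU; apply: closed_closure.
apply: (PS A); [exact: PU | exact: closed_closure |].
rewrite [X in _ `<=` X](closure_id A).1 //; apply: closureS => x /= nch.
have [cf|ncf] := pselect {for x, continuous f}; last by left; apply: subset_closure.
have [cg|ncg] := pselect {for x, continuous g}; last by right; apply: subset_closure.
by exfalso; apply/nch/hcont.
Qed.

Lemma CP_cst (c : R) : CP R P (fun _ => c).
Proof.
case: hP => -[A PA] _ _ PS; rewrite /CP /=.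
have -> : discont (fun _ : X => c) = set0.
  by rewrite -subset0 => x /=; apply; exact: cvg_cst.
by rewrite closure0; apply: (PS A) => //; exact: closed0.
Qed.

Lemma CP_add (f g : X -> R) : CP R P f -> CP R P g -> CP R P (fun x => f x + g x).
Proof. by apply: CP_lift => x cf cg; apply: cvgD. Qed.

Lemma CP_mul (f g : X -> R) : CP R P f -> CP R P g -> CP R P (fun x => f x * g x).
Proof. by apply: CP_lift => x cf cg; apply: cvgM. Qed.

Lemma CP_opp (f : X -> R) : CP R P f -> CP R P (fun x => - f x).
Proof. by move=> Cf; apply: (CP_lift _ Cf Cf) => x cf _; apply: cvgN. Qed.

Lemma ideal_mulr (I : set (X -> R)) (f g : X -> R) :
  is_ideal P I -> I f -> CP R P g -> I (fun x => f x * g x).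
Proof.
case=> _ _ _ _ IM If Cg.
by rewrite (_ : (fun x => _) = fun x => g x * f x); [exact: IM | apply/funext => x; rewrite mulrC].
Qed.

Lemma nonzero_funP (f : X -> R) : f <> zero_fun <-> exists x, f x != 0.
Proof.
split=> [fn0 | [x fx] f0]; last by move: fx; rewrite f0 eqxx.
apply: contrapT => nx; apply/fn0/funext => x.
by apply/eqP/negPn/negP => fx; apply: nx; exists x.
Qed.

Definition vanishing_at (y : X) : set (X -> R) := [set h | CP R P h /\ h y = 0].

Lemma vanishing_at_ideal y : is_ideal P (vanishing_at y).
Proof.
split.
- by move=> h [].
- by split; [apply: CP_cst |].
- by move=> f g [Cf f0] [Cg g0]; split; [apply: CP_add | rewrite f0 g0 addr0].
- by move=> f [Cf f0]; split; [apply: CP_opp | rewrite f0 oppr0].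
- by move=> f g Cg [Cf f0]; split; [apply: CP_mul | rewrite f0 mulr0].
Qed.

Lemma vanishing_at_maximal y : is_maximal_ideal P (vanishing_at y).
Proof.
split; first exact: vanishing_at_ideal.
  by move=> [_] /eqP; rewrite oner_eq0.
move=> J [JC _ JD JN JM] J1 sub; apply/seteqP; split => // h Jh.
split; first exact: JC.
apply: contrapT => /eqP hy.
have Jshift : J (fun x => h x - h y).
  apply: sub; split; last by rewrite subrr.
  by apply: CP_add; [exact: JC | exact: CP_cst].
have Jcst : J (fun _ => h y).
  rewrite (_ : (fun _ => _) = fun x => h x + - (h x - h y)); first exact/JD/JN.
  by apply/funext => x; rewrite opprB addrC subrK.
apply: J1; suff -> : Defs.one_fun = (fun _ : X => (h y)^-1 * h y) by exact/JM/Jcst/CP_cst.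
by apply/funext => x; rewrite mulVf.
Qed.

Lemma Mof_coz (a g : X -> R) : CP R P a -> Mof P a g -> coz g `<=` coz a.
Proof.
move=> Ca [_ Mg] y gy; apply/negP => /eqP ay.
have [_ gy0] := Mg _ (vanishing_at_maximal y) (conj Ca ay).
by move: gy; rewrite /coz /= gy0 eqxx.
Qed.

Definition coz_ideal (f : X -> R) : set (X -> R) :=
  [set g | CP R P g /\ coz g `<=` coz f].

Lemma coz_ideal_z_ideal f : is_z_ideal P (coz_ideal f).
Proof.
split; last first.
  move=> a [Ca sa] g Mg; split; first by case: Mg.
  by move=> y /(Mof_coz Ca Mg) /sa.
split.
- by move=> g [].
- by split; [apply: CP_cst | move=> y; rewrite /coz /= eqxx].
- move=> g h [Cg sg] [Ch sh]; split; first exact: CP_add.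
  move=> y; rewrite /coz /=; have [gy|gy] := eqVneq (g y) 0; last by move=> _; apply: sg.
  by rewrite gy add0r; apply: sh.
- by move=> g [Cg sg]; split; [apply: CP_opp | move=> y; rewrite /coz /= oppr_eq0; apply: sg].
- move=> g h Cg [Ch sh]; split; first exact: CP_mul.
  by move=> y; rewrite /coz /= mulf_eq0 negb_or => /andP[_]; apply: sh.
Qed.

Lemma coz_ideal_nonzero f : CP R P f -> f <> zero_fun -> nonzero_ideal (coz_ideal f).
Proof. by move=> Cf fn0; exists f => //; split. Qed.

Section EssentialIdeal.
Variable E : set (X -> R).
Hypothesis IE : is_ideal P E.

Lemma int_bigcapZ_eq0_essential :
  int_XP R P (bigcapZ E) = set0 -> essential_ideal P E.
Proof.
move=> hint; split => // J IJ [g Jg /nonzero_funP[x gx]].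
have CJ : J `<=` CP R P by case: IJ.
have [z [e [Ee ez gz]]] : exists z e, [/\ E e, e z != 0 & g z != 0].
  apply: contrapT => ne.
  suff : int_XP R P (bigcapZ E) x by rewrite hint.
  exists g; first exact: CJ.
  split => // z gz f Ef; apply: contrapT => /eqP fz; apply: ne; by exists z, f.
exists (fun x => g x * e x); last by apply/nonzero_funP; exists z; rewrite mulf_eq0 negb_or gz.
have CE : E `<=` CP R P by case: IE.
split; last exact: ideal_mulr IJ Jg (CE _ Ee).
by case: IE => _ _ _ _ EM; apply: EM (CJ _ Jg) Ee.
Qed.

Lemma essential_meets_z_ideals : essential_ideal P E ->
  forall J, is_z_ideal P J -> nonzero_ideal J ->
    exists2 f, (E `&` J) f & f <> zero_fun.
Proof. by case=> _ meetJ J [IJ _]; apply: meetJ. Qed.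

Lemma meets_z_ideals_int_bigcapZ_eq0 :
  (forall J, is_z_ideal P J -> nonzero_ideal J ->
     exists2 f, (E `&` J) f & f <> zero_fun) ->
  int_XP R P (bigcapZ E) = set0.
Proof.
move=> meetJ; rewrite -subset0 => x0 [f Cf [fx0 sub]].
have fn0 : f <> zero_fun by apply/nonzero_funP; exists x0.
case: (meetJ _ (coz_ideal_z_ideal f) (coz_ideal_nonzero Cf fn0)).
move=> g [Eg [_ sg]] /nonzero_funP[y gy].
by move: gy (sub y (sg y gy) g Eg) => /eqP.
Qed.

End EssentialIdeal.
End CPRing.

Theorem theorem2p16 (X : topologicalType) (R : realType)
  (P : set (set X)) (E : set (X -> R)) :
  accessible_space X -> closed_ideal P ->
  is_ideal P E -> nonzero_ideal E ->
  [/\ ((forall J, is_z_ideal P J -> nonzero_ideal J ->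
          exists2 f, (E `&` J) f & f <> zero_fun) <->
       essential_ideal P E),
      (essential_ideal P E <-> int_XP R P (bigcapZ E) = set0) &
      ((forall J, is_z_ideal P J -> nonzero_ideal J ->
          exists2 f, (E `&` J) f & f <> zero_fun) <->
       int_XP R P (bigcapZ E) = set0)].
Proof.
move=> _ hP IE _.
have h13 := @meets_z_ideals_int_bigcapZ_eq0 X R P hP E.
have h32 := int_bigcapZ_eq0_essential IE.
have h21 := @essential_meets_z_ideals X R P E.
split; split.
- by move/h13/h32.
- exact: h21.
- by move/h21/h13.
- exact: h32.
- exact: h13.
- by move/h32/h21.
Qed.
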